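(* Let $A\in\mathrm{GL}_{n}(\mathbb{Z})$ be irreducible and have an eigenvalue of absolute value $1$. Then the stable word length on $G=\mathbb{Z}^{n}\rtimes_{A}\mathbb{Z}$ (with respect to a finite generating set) is purely positive, i.e. it is positive on every element of infinite order.
   Context: $\mathbb{Z}^{n}\rtimes_{A}\mathbb{Z}$ is the semidirect product in which a generator of $\mathbb{Z}$ acts on $\mathbb{Z}^n$ by $A$. $A$ is irreducible if $\mathbb{Z}^n$ has no nonzero proper $A$-invariant subgroup $I$ with $\mathbb{Z}^n/I$ torsion-free (equivalently, $\mathbb{Q}^n$ has no nonzero proper $A$-invariant subspace). For a finite symmetric generating set $S$ with word length $|\cdot|_S$, the stable word length is $\mathrm{swl}_S(g)=\lim_{k\to\infty}|g^{k}|_S/k$. *)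

From HB Require Import structures.
From mathcomp Require Import all_boot all_order all_algebra all_field.
From mathcomp Require Import all_classical all_reals all_analysis.
Set Implicit Arguments. Unset Strict Implicit. Unset Printing Implicit Defensive.
Import Order.TTheory GRing.Theory Num.Theory numFieldNormedType.Exports.
Local Open Scope ring_scope.
Local Open Scope classical_set_scope.

Section SemiDirect.
Variables (n : nat) (A : 'M[int]_n).

(* A^k for k : int (A is assumed invertible over Z when used). *)
Definition Apow (k : int) : 'M[int]_n :=
  match k with
  | Posz m => A ^+ m
  | Negz m => (invmx A) ^+ m.+1
  end.

(* Elements of Z^n ⋊_A Z : pairs (v, k) standing for v t^k, where t is the
   generator of Z acting on Z^n (column vectors) by t v t^-1 = A v. *)
Definition G : Type := ('cV[int]_n * int)%type.

Definition gmul (x y : G) : G := (x.1 + Apow x.2 *m y.1, x.2 + y.2).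
Definition gone : G := (0, 0).
Definition ginv (x : G) : G := (- (Apow (- x.2) *m x.1), - x.2).
Definition gpow (g : G) (k : nat) : G := iter k (gmul g) gone.

Definition is_word (S : seq G) (g : G) (k : nat) : Prop :=
  exists s : seq G, [/\ size s = k, all (fun x => x \in S) s & foldr gmul gone s = g].

Definition gen_set (S : seq G) : Prop :=
  (forall x, x \in S -> ginv x \in S) /\ (forall g, exists k, is_word S g k).

(* word length |g|_S : least length of a word in S representing g (0 if none) *)
Definition wl (S : seq G) (g : G) : nat :=
  match pselect (exists k, `[< is_word S g k >]) with
  | left h => ex_minn h
  | right _ => 0%N
  end.

Definition swl (R : realType) (S : seq G) (g : G) : R :=
  lim ((fun k : nat => (wl S (gpow g k))%:R / k%:R : R) @ \oo).

Definition infinite_order (g : G) : Prop := forall m : nat, (0 < m)%N -> gpow g m <> gone.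

End SemiDirect.

(* A subspace of
   (column vectors) Q^n is encoded as the row space of W (rows = transposed vectors);
   A-invariance  A W ⊆ W  reads  W *m A^T ⊆ W  in row form. *)
Definition irreducible_mx (n : nat) (A : 'M[int]_n) : Prop :=
  forall W : 'M[rat]_n,
    (W *m (map_mx (fun x : int => x%:~R : rat) A)^T <= W)%MS ->
    (W == (0 : 'M[rat]_n))%MS \/ (W == (1%:M : 'M[rat]_n))%MS.

From HB Require Import structures.
From mathcomp Require Import all_boot all_order all_algebra all_field.
From mathcomp Require Import all_classical all_reals all_analysis.
Import Order.TTheory GRing.Theory Num.Theory numFieldNormedType.Exports.
Set Implicit Arguments.
Unset Strict Implicit.
Unset Printing Implicit Defensive.
Local Open Scope ring_scope.
Local Open Scope classical_set_scope.

(* Let w be a left eigenvector of A over the algebraic numbers, for an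
   eigenvalue z with |z| = 1.  Since A^k only rescales w by z^k, the function
   nu (v t^k) = |w v| + |k| is subadditive on the semidirect product, hence
   bounded by a multiple of word length.  For g = v t^k of infinite order,
   nu (g^m) grows linearly in m: through |k| when k <> 0, and through |w v|
   when k = 0, which is nonzero because the cyclic A-invariant rational
   subspace generated by v lies in the kernel of w and is therefore trivial by
   irreducibility.  So |g^m|_S >= m / N for some N, and by Fekete's lemma the
   stable word length exists and is at least 1 / N. *)

Section Fekete.
Variable a : nat -> nat.
Hypothesis a_subadd : forall p q, (a (p + q) <= a p + a q)%N.

Lemma subadditive_mul_add q m r : (a (q * m + r) <= q * a m + r * a 1 + a 0)%N.
Proof.
have le_r s : (a s <= s * a 1 + a 0)%N.
  elim: s => [|s IHs] //; rewrite -addn1 (leq_trans (a_subadd _ _)) //.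
  by rewrite mulnDl mul1n addnAC leq_add2r.
elim: q => [|q IHq]; first by rewrite !mul0n !add0n le_r.
rewrite !mulSn -!addnA (leq_trans (a_subadd _ _)) // leq_add2l.
by rewrite !addnA.
Qed.

Variable R : realType.
Let u k : R := (a k)%:R / k%:R.

Lemma subadditive_ratio_le m k : (0 < m)%N -> (0 < k)%N ->
  u k <= u m + (m * a 1 + a 0)%:R / k%:R.
Proof.
move=> m_gt0 k_gt0; have k_gt0R : 0 < k%:R :> R by rewrite ltr0n.
have a_k : (a k <= k %/ m * a m + (m * a 1 + a 0))%N.
  rewrite {1}(divn_eq k m) (leq_trans (subadditive_mul_add _ _ _)) //.
  by rewrite -addnA leq_add2l leq_add2r leq_mul2r ltnW ?ltn_pmod ?orbT.
rewrite /u ler_pdivrMr // mulrDl divfK ?gt_eqF //.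
apply: le_trans (_ : (k %/ m * a m)%:R + (m * a 1 + a 0)%:R <= _).
  by rewrite -natrD ler_nat.
rewrite lerD2r natrM mulrC -mulrA ler_wpM2l ?ler0n //.
rewrite mulrC ler_pdivlMr ?ltr0n //.
by rewrite -natrM ler_nat leq_divM.
Qed.

Lemma fekete_cvg : u @ \oo --> inf (u @` [set k | (0 < k)%N]).
Proof.
set E := u @` _.
have E_ne : nonempty E by exists (u 1%N), 1%N.
have E_lb : has_lbound E by exists 0 => _ [k _ <-]; rewrite divr_ge0.
apply/cvgrPdist_lt => e e_gt0.
have e2_gt0 : 0 < e / 2 by rewrite divr_gt0.
have [_ [m m_gt0 <-] um] := inf_adherent e2_gt0 (conj E_ne E_lb).
near=> k.
have k_gt0 : (0 < k)%N by near: k; exact: nbhs_infty_gt.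
have inf_le : inf E <= u k by apply: ge_inf => //; exists k.
have small : (m * a 1 + a 0)%:R / k%:R < e / 2 :> R.
  rewrite ltr_pdivrMr ?ltr0n // mulrC -ltr_pdivrMr ?divr_gt0 ?ltr0Sn //.
  by near: k; exact: nbhs_infty_gtr.
rewrite distrC ger0_norm ?subr_ge0 // ltrBlDl.
rewrite (le_lt_trans (subadditive_ratio_le m_gt0 k_gt0)) // [e]splitr addrA.
by rewrite ltr_leD // ltW.
Unshelve. all: end_near.
Qed.

Lemma lim_subadditive_gt0 N : (0 < N)%N -> (forall k, k <= N * a k)%N ->
  0 < lim (u @ \oo).
Proof.
move=> N_gt0 le_Na; rewrite (cvg_lim _ fekete_cvg) //.
apply: (@lt_le_trans _ _ N%:R^-1); first by rewrite invr_gt0 ltr0n.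
apply: lb_le_inf; first by exists (u 1%N), 1%N.
move=> _ [k k_gt0 <-].
rewrite /u ler_pdivlMr ?ltr0n // mulrC ler_pdivrMr ?ltr0n //.
by rewrite -natrM ler_nat mulnC le_Na.
Qed.

End Fekete.

Section WordLength.
Variables (n : nat) (A : 'M[int]_n.+1) (S : seq (G n.+1)).
Hypothesis A_unit : A \in unitmx.

Lemma Apow_exprz k : Apow A k = A ^ k.
Proof. by case: k => m //=; rewrite /exprz -exprVn. Qed.

Lemma ApowD k l : Apow A (k + l) = Apow A k *m Apow A l.
Proof. by rewrite !Apow_exprz exprzDr // mulmxE. Qed.

Lemma gmulA x y t : gmul A (gmul A x y) t = gmul A x (gmul A y t).
Proof. by rewrite /gmul /= ApowD mulmxDr mulmxA !addrA. Qed.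

Lemma gmul1g x : gmul A (gone n.+1) x = x.
Proof. by case: x => v k; rewrite /gmul /= expr0 mul1mx !add0r. Qed.

Lemma gmulg1 x : gmul A x (gone n.+1) = x.
Proof. by case: x => v k; rewrite /gmul /= mulmx0 !addr0. Qed.

Lemma foldr_gmul_cat s t :
  foldr (gmul A) (gone n.+1) (s ++ t) =
  gmul A (foldr (gmul A) (gone n.+1) s) (foldr (gmul A) (gone n.+1) t).
Proof. by elim: s => [|x s IHs] /=; rewrite ?gmul1g ?IHs ?gmulA. Qed.

Lemma gpowD g k l : gpow A g (k + l) = gmul A (gpow A g k) (gpow A g l).
Proof. by elim: k => [|k IHk] /=; rewrite ?gmul1g // IHk gmulA. Qed.

Lemma gpow_snd g k : (gpow A g k).2 = g.2 *+ k.
Proof. by elim: k => [|k IHk] //=; rewrite IHk mulrS. Qed.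

Lemma gpow_fst g k : g.2 = 0 -> (gpow A g k).1 = g.1 *+ k.
Proof.
by move=> g2_0; elim: k => [|k IHk] //=; rewrite IHk g2_0 /= expr0 mul1mx mulrS.
Qed.

Lemma wl_min g k : is_word A S g k -> (wl A S g <= k)%N.
Proof.
move=> gk; rewrite /wl; case: pselect => [ex|[]].
  by case: ex_minnP => m _; apply; apply/asboolP.
by exists k; apply/asboolP.
Qed.

Lemma is_word_wl g : gen_set A S -> is_word A S g (wl A S g).
Proof.
case=> _ /(_ g) ex; rewrite /wl; case: pselect => [ex'|[]].
  by case: ex_minnP => m /asboolP.
by case: ex => k gk; exists k; apply/asboolP.
Qed.

Lemma wl_mul x y :
  gen_set A S -> (wl A S (gmul A x y) <= wl A S x + wl A S y)%N.
Proof.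
move=> S_gen; apply: wl_min.
have [s [<- s_S <-]] := is_word_wl x S_gen.
have [t [<- t_S <-]] := is_word_wl y S_gen.
by exists (s ++ t); rewrite size_cat all_cat s_S t_S foldr_gmul_cat.
Qed.

End WordLength.

Section LengthFunction.
Variables (n : nat) (A : 'M[int]_n.+1) (S : seq (G n.+1)).
Variable R : archiNumFieldType.
Variable nu : G n.+1 -> R.
Hypotheses (nu_ge0 : forall x, 0 <= nu x) (nu_gone : nu (gone n.+1) = 0).
Hypothesis nu_mul : forall x y, nu (gmul A x y) <= nu x + nu y.

Lemma nu_foldr_le s : all (fun x => x \in S) s ->
  nu (foldr (gmul A) (gone n.+1) s) <= (size s)%:R * \sum_(y <- S) nu y.
Proof.
elim: s => [|x s IHs] /=; first by rewrite nu_gone mul0r.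
case/andP=> x_S s_S; rewrite (le_trans (nu_mul _ _)) // -natr1 mulrDl mul1r.
rewrite addrC lerD ?IHs // (perm_big _ (perm_to_rem x_S)) big_cons lerDl.
by rewrite sumr_ge0.
Qed.

Lemma nu_le_wl g : gen_set A S -> nu g <= (wl A S g)%:R * \sum_(y <- S) nu y.
Proof.
by move=> S_gen; have [s [<- s_S <-]] := is_word_wl g S_gen; apply: nu_foldr_le.
Qed.

Lemma wl_gpow_linear g c : gen_set A S -> 0 < c ->
    (forall k, k%:R * c <= nu (gpow A g k)) ->
  exists2 N, (0 < N)%N & forall k, (k <= N * wl A S (gpow A g k))%N.
Proof.
move=> S_gen c_gt0 nu_g; set M := \sum_(y <- S) nu y.
have M_ge0 : 0 <= M / c by rewrite divr_ge0 ?sumr_ge0 ?ltW.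
have M_lt := archi_boundP M_ge0; set N := Num.bound _ in M_lt.
exists N; first by rewrite -(ltr_nat R) (le_lt_trans M_ge0).
move=> k; rewrite -(ler_nat R) natrM -(ler_pM2r c_gt0).
apply: le_trans (nu_g k) _; apply: le_trans (nu_le_wl _ S_gen) _.
by rewrite -/M [N%:R * _]mulrC -mulrA ler_wpM2l // -ler_pdivrMr // ltW.
Qed.

End LengthFunction.

Lemma Cayley_Hamilton_expn (R : comNzRingType) n (B : 'M[R]_n.+1) :
  B ^+ n.+1 = - \sum_(j < n.+1) (char_poly B)`_j *: B ^+ j.
Proof.
have p_size : size (char_poly B) = n.+2 by rewrite size_char_poly.
have p_lead : (char_poly B)`_n.+1 = 1.
  by have /monicP := char_poly_monic B; rewrite lead_coefE p_size.
have := Cayley_Hamilton B; rewrite -[X in horner_mx _ X]coefK poly_def p_size.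
rewrite linear_sum big_ord_recr /= horner_mxZ rmorphXn /= horner_mx_X p_lead.
rewrite scale1r => /eqP; rewrite addrC addr_eq0 => /eqP ->; congr (- _).
by apply: eq_bigr => j _; rewrite horner_mxZ rmorphXn /= horner_mx_X.
Qed.

Section Krylov.
Variables (F : fieldType) (n : nat) (B : 'M[F]_n.+1) (x : 'rV[F]_n.+1).

Definition krylov_mx : 'M[F]_n.+1 := \matrix_(i < n.+1) (x *m B ^+ i).

Lemma krylov_mx_stable : stablemx krylov_mx B.
Proof.
have row_krylov (i : 'I_n.+1) : (x *m B ^+ i <= krylov_mx)%MS.
  by rewrite -(rowK (fun j : 'I_n.+1 => x *m B ^+ j) i) row_sub.
apply/row_subP => i; rewrite row_mul rowK -mulmxA mulmxE -exprSr.
have [lt_i_n|] := ltnP i.+1 n.+1; first exact: (row_krylov (Ordinal lt_i_n)).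
move=> n_lt_i; have -> : i.+1 = n.+1.
  by apply/eqP; rewrite eqn_leq n_lt_i ltn_ord.
rewrite Cayley_Hamilton_expn mulmxN eqmx_opp mulmx_sumr summx_sub // => j _.
by rewrite -scalemxAr scalemx_sub.
Qed.

Lemma map_krylov_mx_eigen (K : fieldType) (f : {rmorphism F -> K})
    (v : 'cV[K]_n.+1) z :
  map_mx f B *m v = z *: v -> map_mx f x *m v = 0 ->
  map_mx f krylov_mx *m v = 0.
Proof.
move=> Bv xv; apply/row_matrixP => i; rewrite row_mul row0 -map_row rowK.
elim: (i : nat) => [|k IHk]; first by rewrite expr0 mulmx1.
by rewrite exprSr mulmxA map_mxM -mulmxA Bv -scalemxAr IHk scaler0.
Qed.

End Krylov.

Lemma mulmx_exprz_eigen (F : fieldType) n (M : 'M[F]_n.+1) (w : 'rV_n.+1) c k :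
  M \in unitmx -> c != 0 -> w *m M = c *: w -> w *m M ^ k = c ^ k *: w.
Proof.
move=> M_unit c_neq0 wM.
have wMn m : w *m M ^+ m = c ^+ m *: w.
  elim: m => [|m IHm]; first by rewrite !expr0 mulmx1 scale1r.
  by rewrite exprSr -mulmxE mulmxA IHm -scalemxAl wM scalerA -exprSr.
case: k => m; first exact: wMn.
have cX_neq0 : c ^+ m.+1 != 0 by rewrite expf_neq0.
rewrite /exprz -[in LHS](scale1r w) -(mulVf cX_neq0) -scalerA -wMn -scalemxAl.
by rewrite mulmxK // unitrX.
Qed.

Local Notation toC := (map_mx (fun x : int => x%:~R : algC)).

Section EigenForm.
Variables (n : nat) (A : 'M[int]_n.+1) (z : algC) (w : 'rV[algC]_n.+1).
Hypothesis w_eigen : w *m toC A = z *: w.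

Definition eigenform (v : 'cV[int]_n.+1) : algC := (w *m toC v) 0 0.

Lemma eigenformD u v : eigenform (u + v) = eigenform u + eigenform v.
Proof. by rewrite /eigenform map_mxD mulmxDr mxE. Qed.

Lemma eigenformMn v k : eigenform (v *+ k) = eigenform v *+ k.
Proof. by rewrite /eigenform !raddfMn mulmxnE. Qed.

Lemma eigenform_eq0 v :
  irreducible_mx A -> w != 0 -> eigenform v = 0 -> v = 0.
Proof.
move=> A_irr w_neq0 form_v; pose toQ := fun x : int => x%:~R : rat.
have toC_ratr m p (M : 'M[int]_(m, p)) : map_mx ratr (map_mx toQ M) = toC M.
  by apply/matrixP => i j; rewrite !mxE rmorph_int.
pose x := (map_mx toQ v)^T; pose K := krylov_mx (map_mx toQ A)^T x.
have K_w : map_mx ratr K *m w^T = 0.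
  apply: (map_krylov_mx_eigen _ (z := z)).
    by rewrite -map_trmx toC_ratr -trmx_mul w_eigen linearZ.
  rewrite -map_trmx toC_ratr -trmx_mul [w *m _]mx11_scalar -/(eigenform v).
  by rewrite form_v raddf0 trmx0.
have [/eqmx0P K0|] := A_irr K (krylov_mx_stable _ _).
  move/(congr1 (row 0)): K0; rewrite rowK expr0 mulmx1 row0 => /(congr1 trmx).
  rewrite trmxK trmx0 => /matrixP v0; apply/matrixP => i j.
  by have /eqP := v0 i j; rewrite !mxE intr_eq0 => /eqP.
case/andP=> _; rewrite sub1mx => /row_fullP[D DK]; case/eqP: w_neq0.
apply: trmx_inj.
by rewrite trmx0 -[w^T]mul1mx -(map_mx1 ratr) -DK map_mxM -mulmxA K_w mulmx0.
Qed.

Hypotheses (A_unit : A \in unitmx) (z_norm1 : `|z| = 1).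

Lemma norm_eigenform_Apow k v : `|eigenform (Apow A k *m v)| = `|eigenform v|.
Proof.
have z_neq0 : z != 0 by rewrite -normr_eq0 z_norm1 oner_neq0.
have toCA_unit : toC A \in unitmx.
  by move: A_unit; rewrite !unitmxE det_map_mx; apply: rmorph_unit.
have zk_norm1 : `|z ^ k| = 1.
  by case: k => m; rewrite /exprz ?normfV normrX z_norm1 expr1n ?invr1.
rewrite /eigenform map_mxM mulmxA Apow_exprz // rmorphXz //.
rewrite (mulmx_exprz_eigen _ toCA_unit z_neq0 w_eigen) -scalemxAl mxE normrM.
by rewrite zk_norm1 mul1r.
Qed.

Definition eigen_length (x : G n.+1) : algC :=
  `|eigenform x.1| + `|x.2%:~R : algC|.

Lemma eigen_length_ge0 x : 0 <= eigen_length x.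
Proof. by rewrite addr_ge0. Qed.

Lemma eigen_length_gone : eigen_length (gone n.+1) = 0.
Proof.
by rewrite /eigen_length /eigenform /= map_mx0 mulmx0 mxE normr0 add0r.
Qed.

Lemma eigen_length_mul x y :
  eigen_length (gmul A x y) <= eigen_length x + eigen_length y.
Proof.
rewrite /eigen_length /= eigenformD rmorphD addrACA.
by rewrite -(norm_eigenform_Apow x.2 y.1) lerD ?ler_normD.
Qed.

Lemma eigen_length_gpow_linear g :
  irreducible_mx A -> w != 0 -> g <> gone n.+1 ->
  exists2 c, 0 < c & forall k, k%:R * c <= eigen_length (gpow A g k).
Proof.
move=> A_irr w_neq0 g_neq1; have [g2_0|g2_neq0] := eqVneq g.2 0.
  exists `|eigenform g.1|.
    rewrite normr_gt0; apply: contra_notN g_neq1 => /eqP /eigenform_eq0 g1_0.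
    by case: g g2_0 g1_0 => v k /= -> ->.
  move=> k; rewrite /eigen_length gpow_fst // eigenformMn normrMn mulr_natl.
  by rewrite lerDl.
exists `|g.2%:~R : algC|; first by rewrite normr_gt0 intr_eq0.
by move=> k; rewrite /eigen_length gpow_snd rmorphMn normrMn mulr_natl lerDr.
Qed.

End EigenForm.

Theorem lemma12 (n : nat) (A : 'M[int]_n) :
  A \in unitmx ->
  irreducible_mx A ->
  (exists z : algC, `|z| = 1 /\ eigenvalue (map_mx (fun x : int => x%:~R : algC) A) z) ->
  forall (R : realType) (S : seq (G n)), gen_set A S ->
  forall g : G n, infinite_order A g -> 0 < swl A R S g.
Proof.
case: n A => [|n] A A_unit A_irr [z [z_norm1 /eigenvalueP[w w_eigen w_neq0]]].
  by move: w_neq0; rewrite thinmx0 eqxx.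
move=> R S S_gen g g_inf.
have g_neq1 : g <> gone n.+1.
  by move=> g1; apply: (g_inf 1%N) => //=; rewrite gmulg1.
have [c c_gt0 length_g] := eigen_length_gpow_linear w_eigen A_irr w_neq0 g_neq1.
have [N N_gt0 le_N] := wl_gpow_linear (eigen_length_ge0 w)
  (eigen_length_gone w) (eigen_length_mul w_eigen A_unit z_norm1)
  S_gen c_gt0 length_g.
apply: (lim_subadditive_gt0 _ _ N_gt0 le_N) => p q.
by rewrite gpowD // wl_mul.
Qed.
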